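(* Let $L>0$, $\Omega=(-L,L)$, and let $h>0$ be a mesh size with $L/h\in\mathbb{N}$ and $L\ge 4h$. Assume there are continuous functions $f:[-L,L]\times[0,\infty)\to\mathbb{R}$, $g:[0,\infty)\to\mathbb{R}$ and a constant $K>0$ such that (i) $g(0)>0$, $g$ is strictly increasing, and with $G(s):=\int_K^s g(t)\,dt$ one has $\lim_{s\to\infty} \frac{s}{\sqrt{G(s)}}=0$; (ii) $f(x,s)\ge g(s)$ for all $s\ge K$ and all $x\in[-L,L]$. Then there exists a constant $\overline{M}$, independent of the mesh size $h$, such that every non-negative solution $u:\overline{\Omega}_h\to[0,\infty)$ of $$-\Delta_h u(x)=f(x,u(x))\ \ (x\in\Omega_h),\qquad u=0\ \text{on }\partial\Omega_h$$ satisfies $\|u\|_\infty=\max_{x\in\overline{\Omega}_h}|u(x)|\le \overline{M}$.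
   Context: For the mesh size $h>0$: $\mathbb{R}_h=h\mathbb{Z}$, $\overline{\Omega}_h=[-L,L]\cap h\mathbb{Z}$, $\Omega_h=(-L,L)\cap h\mathbb{Z}$, $\partial\Omega_h=\{-L,L\}$. The discrete Laplacian is $\Delta_h u(x)=\frac{u(x+h)-2u(x)+u(x-h)}{h^2}$ for $x\in\Omega_h$. *)

From Stdlib Require Import Reals ZArith.
From Coquelicot Require Import Coquelicot.
Open Scope R_scope.

Definition cont_on_strip (L : R) (f : R -> R -> R) : Prop :=
  forall x s, -L <= x <= L -> 0 <= s ->
  forall eps, 0 < eps -> exists delta, 0 < delta /\
    forall y t, -L <= y <= L -> 0 <= t ->
      Rabs (y - x) < delta -> Rabs (t - s) < delta ->
      Rabs (f y t - f x s) < eps.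

Definition cont_on_halfline (g : R -> R) : Prop :=
  forall s, 0 <= s -> forall eps, 0 < eps -> exists delta, 0 < delta /\
    forall t, 0 <= t -> Rabs (t - s) < delta -> Rabs (g t - g s) < eps.

Definition strict_incr_halfline (g : R -> R) : Prop :=
  forall s t, 0 <= s -> s < t -> g s < g t.

Definition Gprim (g : R -> R) (K s : R) : R := RInt g K s.

(* Grid functions u : Z -> R, u k = value at the node x = k*h.
   Discrete Laplacian at node k. *)
Definition dlap (h : R) (u : Z -> R) (k : Z) : R :=
  (u (k + 1)%Z - 2 * u k + u (k - 1)%Z) / (h ^ 2).

(* u is a non-negative solution of -Delta_h u = f(x,u) on Omega_h,
   u = 0 on the boundary {-L, L} = {-n h, n h}, where L = n h. *)
Definition is_nonneg_discrete_solution (f : R -> R -> R) (n : nat) (h : R)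
    (u : Z -> R) : Prop :=
  (forall k, (- Z.of_nat n <= k <= Z.of_nat n)%Z -> 0 <= u k) /\
  (forall k, (- Z.of_nat n < k < Z.of_nat n)%Z ->
      - dlap h u k = f (IZR k * h) (u k)) /\
  u (- Z.of_nat n)%Z = 0 /\ u (Z.of_nat n) = 0.

From Stdlib Require Import Reals ZArith Lra Lia Psatz Classical ClassicalEpsilon.
From Coquelicot Require Import Coquelicot.
Open Scope R_scope.

(* Write x_j = j h and L = N h.  By continuity f >= -C on [-L,L] x [0,K], and f >= g > 0
   beyond K, so w := u + C (L^2 - x^2) / 2 is discretely concave, dominates u and vanishes
   on the boundary.  The chord inequality for w then gives u >= u(x0)/4 - C L^2/2 on the
   middle half |x| <= L/2, for every node x0.  Put m := u(0)/4 - C L^2/2.  On the middle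
   half u >= m, so if m >= K then f(x,u) >= g(u) >= g(m) there, u + g(m) x^2 / 2 is
   concave on the middle half (whose grid half-width is at least 3L/8 as N >= 4), and
   its chord inequality at 0 gives g(m) (3L/8)^2 <= 2 u(0) - 2m = 6m + 4 C L^2.  Since
   s / sqrt (G s) -> 0 and G s <= s g s, g grows superlinearly, which bounds m and hence
   u, uniformly in h. *)

Lemma Rabs_le_fold_Rmax (A : Type) (F : A -> R) (l : list A) (t : A) :
  List.In t l -> Rabs (F t) <= List.fold_right (fun a m => Rmax (Rabs (F a)) m) 0 l.
Proof.
  induction l as [|a l IH]; simpl; [tauto|].
  intros [<-|Ht]; [apply Rmax_l|].
  eapply Rle_trans; [exact (IH Ht)|apply Rmax_r].
Qed.

Lemma cont_on_strip_modulus (L : R) (f : R -> R -> R) : cont_on_strip L f ->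
  exists delta : R -> R -> posreal, forall x s y t,
    -L <= x <= L -> 0 <= s -> -L <= y <= L -> 0 <= t ->
    Rabs (y - x) < delta x s -> Rabs (t - s) < delta x s ->
    Rabs (f y t - f x s) < 1.
Proof.
  intros Hf.
  assert (Hd : forall x s, exists d : posreal, -L <= x <= L -> 0 <= s ->
    forall y t, -L <= y <= L -> 0 <= t -> Rabs (y - x) < d -> Rabs (t - s) < d ->
    Rabs (f y t - f x s) < 1).
  { intros x s.
    destruct (classic (-L <= x <= L /\ 0 <= s)) as [[Hx Hs]|Hout].
    - destruct (Hf x s Hx Hs 1 Rlt_0_1) as [d [Hd0 Hdf]].
      now exists (mkposreal d Hd0).
    - exists (mkposreal 1 Rlt_0_1). intros Hx Hs. tauto. }
  exists (fun x s => proj1_sig (constructive_indefinite_description _ (Hd x s))).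
  intros x s y t Hx Hs.
  destruct (constructive_indefinite_description _ (Hd x s)) as [d Hdf]; simpl.
  exact (Hdf Hx Hs y t).
Qed.

(* Cover the compact box by finitely many neighbourhoods on which f oscillates by less than 1. *)
Lemma cont_on_strip_bounded_below_box (L K : R) (f : R -> R -> R) :
  cont_on_strip L f ->
  exists C, 0 <= C /\ forall x s, -L <= x <= L -> 0 <= s <= K -> - C <= f x s.
Proof.
  intros Hf.
  destruct (cont_on_strip_modulus L f Hf) as [delta Hdelta].
  set (F := fun t : R * (R * unit) => f (fst t) (fst (snd t))).
  apply NNPP; intros Hno.
  apply (compactness_list 2 (-L, (0, tt)) (L, (K, tt))
           (fun t => delta (fst t) (fst (snd t)))).
  intros [l Hl]; apply Hno.
  set (M := List.fold_right (fun a m => Rmax (Rabs (F a)) m) 0 l).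
  exists (Rabs M + 1); split; [pose proof (Rabs_pos M); lra|].
  intros x s Hx Hs.
  destruct (Hl (x, (s, tt)) ltac:(simpl; tauto)) as [[t1 [t2 []]] [Hin [Hbox Hclose]]]; simpl in Hbox, Hclose.
  assert (Hft := Hdelta t1 t2 x s ltac:(lra) ltac:(lra) Hx ltac:(lra)
                   ltac:(tauto) ltac:(tauto)).
  assert (HFt := Rabs_le_fold_Rmax _ F l _ Hin); fold M in HFt; unfold F in HFt; simpl in HFt.
  apply Rabs_def2 in Hft.
  pose proof (Rle_abs M). pose proof (Rabs_maj2 (f t1 t2)).
  lra.
Qed.

Lemma strict_incr_halfline_le (g : R -> R) : strict_incr_halfline g ->
  forall s t, 0 <= s <= t -> g s <= g t.
Proof.
  intros Hinc s t Hst.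
  destruct (Req_dec s t) as [->|Hne]; [lra|].
  left; apply Hinc; lra.
Qed.

Lemma strict_incr_halfline_pos (g : R -> R) : 0 < g 0 -> strict_incr_halfline g ->
  forall s, 0 <= s -> 0 < g s.
Proof.
  intros Hg0 Hinc s Hs.
  pose proof (strict_incr_halfline_le g Hinc 0 s ltac:(lra)); lra.
Qed.

Lemma cont_on_halfline_continuous (g : R -> R) : cont_on_halfline g ->
  forall z, 0 < z -> continuous g z.
Proof.
  intros Hg z Hz.
  apply continuity_pt_filterlim; intros eps Heps.
  destruct (Hg z ltac:(lra) eps Heps) as [d [Hd Hgd]].
  exists (Rmin d z); split; [now apply Rmin_pos|].
  intros t [_ Ht]; simpl in Ht; unfold R_dist in Ht.
  assert (Htz : Rabs (t - z) < z) by (eapply Rlt_le_trans; [exact Ht|apply Rmin_r]).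
  apply Rabs_def2 in Htz.
  apply Hgd; [lra|].
  eapply Rlt_le_trans; [exact Ht|apply Rmin_l].
Qed.

Section Primitive.

Variables (g : R -> R) (K : R).
Hypotheses (K_pos : 0 < K) (g_cont : cont_on_halfline g)
  (g_incr : strict_incr_halfline g).

Lemma Gprim_ex_RInt s : K <= s -> ex_RInt g K s.
Proof.
  intros Hs; apply (@ex_RInt_continuous R_CompleteNormedModule).
  intros z Hz; rewrite Rmin_left in Hz by lra.
  apply cont_on_halfline_continuous; [exact g_cont|lra].
Qed.

Lemma Gprim_le s : K <= s -> Gprim g K s <= (s - K) * g s.
Proof.
  intros Hs; unfold Gprim.
  replace ((s - K) * g s) with (RInt (fun _ => g s) K s) by (now rewrite RInt_const).
  apply RInt_le; [lra|now apply Gprim_ex_RInt|apply ex_RInt_const|].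
  intros x Hx; apply strict_incr_halfline_le; [exact g_incr|lra].
Qed.

Lemma Gprim_ge s : K <= s -> (s - K) * g K <= Gprim g K s.
Proof.
  intros Hs; unfold Gprim.
  replace ((s - K) * g K) with (RInt (fun _ => g K) K s) by (now rewrite RInt_const).
  apply RInt_le; [lra|apply ex_RInt_const|now apply Gprim_ex_RInt|].
  intros x Hx; apply strict_incr_halfline_le; [exact g_incr|lra].
Qed.

(* With [c := A + B + 1], the limit gives [(c s)^2 < G s <= s g s] for large [s]. *)
Lemma g_eventually_above_affine :
  0 < g 0 -> is_lim (fun s => s / sqrt (Gprim g K s)) p_infty 0 ->
  forall A B, 0 <= A -> 0 <= B ->
  exists T, K <= T /\ forall s, T <= s -> A * s + B < g s.
Proof.
  intros Hg0 Hlim A B HA HB.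
  set (c := A + B + 1).
  apply is_lim_spec in Hlim; simpl in Hlim.
  assert (Hc : 0 < / c) by (apply Rinv_0_lt_compat; unfold c; lra).
  destruct (Hlim (mkposreal _ Hc)) as [M HM]; simpl in HM.
  exists (Rmax (K + 1) (M + 1)); split; [pose proof (Rmax_l (K + 1) (M + 1)); lra|].
  intros s Hs.
  pose proof (Rmax_l (K + 1) (M + 1)); pose proof (Rmax_r (K + 1) (M + 1)).
  specialize (HM s ltac:(lra)); rewrite Rminus_0_r in HM.
  set (G := Gprim g K s) in *.
  assert (HG : 0 < G).
  { pose proof (Gprim_ge s ltac:(lra)) as HGge; fold G in HGge.
    pose proof (strict_incr_halfline_pos g Hg0 g_incr K ltac:(lra)).
    nra. }
  assert (Hsqrt : 0 < sqrt G) by now apply sqrt_lt_R0.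
  assert (Hcs : c * s < sqrt G).
  { apply Rabs_def2 in HM; destruct HM as [HM _].
    unfold Rdiv in HM.
    apply (Rmult_lt_compat_r (c * sqrt G)) in HM; [|unfold c; nra].
    replace (s * / sqrt G * (c * sqrt G)) with (c * s) in HM by (field; lra).
    replace (/ c * (c * sqrt G)) with (sqrt G) in HM by (field; unfold c; lra).
    exact HM. }
  assert (Hsq : (c * s) * (c * s) < G).
  { rewrite <- (sqrt_sqrt G) by lra.
    assert (0 <= c * s) by (unfold c; nra). nra. }
  pose proof (Gprim_le s ltac:(lra)) as HGle; fold G in HGle.
  assert (Hgs : c * c * s < g s).
  { pose proof (strict_incr_halfline_pos g Hg0 g_incr s ltac:(lra)).
    apply (Rmult_lt_reg_l s); [lra|].
    assert ((s - K) * g s <= s * g s) by (apply Rmult_le_compat_r; lra).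
    nra. }
  assert (Hc1 : 1 <= c) by (unfold c; lra).
  assert (c * s <= c * c * s) by (assert (0 <= c * s) by nra; nra).
  assert (B <= B * s) by nra.
  unfold c in *; nra.
Qed.

End Primitive.

Definition second_diff (z : Z -> R) (j : Z) : R := z (j + 1)%Z - 2 * z j + z (j - 1)%Z.

Section ConcaveSequence.

Variables (y : nat -> R) (N : nat).
Hypothesis y_concave : forall i, (i + 2 <= N)%nat -> y (S (S i)) - 2 * y (S i) + y i <= 0.

Lemma concave_rise_ge k : (k < N)%nat -> INR k * (y (S k) - y k) <= y k - y 0%nat.
Proof.
  induction k as [|k IH]; intros Hk; [simpl; lra|].
  specialize (IH ltac:(lia)); specialize (y_concave k ltac:(lia)).
  rewrite S_INR; pose proof (pos_INR k); nra.
Qed.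

Lemma concave_rise_le d k : (k + S d = N)%nat -> y N - y k <= INR (S d) * (y (S k) - y k).
Proof.
  revert k; induction d as [|d IH]; intros k Hk.
  - subst N; replace (k + 1)%nat with (S k) by lia; simpl; lra.
  - specialize (IH (S k) ltac:(lia)); specialize (y_concave k ltac:(lia)).
    rewrite (S_INR (S d)); pose proof (pos_INR (S d)); nra.
Qed.

Lemma concave_chord_nat i : (i <= N)%nat -> INR (N - i) * y 0%nat + INR i * y N <= INR N * y i.
Proof.
  intros Hi.
  destruct (Nat.eq_dec i N) as [->|HiN]; [rewrite Nat.sub_diag; simpl; lra|].
  pose proof (concave_rise_ge i ltac:(lia)) as Hbefore.
  pose proof (concave_rise_le (N - i - 1) i ltac:(lia)) as Hafter.
  replace (S (N - i - 1)) with (N - i)%nat in Hafter by lia.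
  rewrite minus_INR in * by lia.
  pose proof (pos_INR i); pose proof (le_INR i N ltac:(lia)).
  nra.
Qed.

End ConcaveSequence.

Lemma concave_chord (z : Z -> R) (a b k : Z) : (a <= k <= b)%Z ->
  (forall j, (a < j < b)%Z -> second_diff z j <= 0) ->
  IZR (b - k) * z a + IZR (k - a) * z b <= IZR (b - a) * z k.
Proof.
  intros Hk Hz.
  set (y := fun i : nat => z (a + Z.of_nat i)%Z).
  assert (Hy : forall i, (i + 2 <= Z.to_nat (b - a))%nat ->
                 y (S (S i)) - 2 * y (S i) + y i <= 0).
  { intros i Hi; specialize (Hz (a + Z.of_nat (S i))%Z ltac:(lia)); unfold second_diff in Hz.
    unfold y.
    replace (a + Z.of_nat (S (S i)))%Z with (a + Z.of_nat (S i) + 1)%Z by lia.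
    replace (a + Z.of_nat i)%Z with (a + Z.of_nat (S i) - 1)%Z by lia.
    exact Hz. }
  pose proof (concave_chord_nat y _ Hy (Z.to_nat (k - a)) ltac:(lia)) as H.
  unfold y in H.
  replace (Z.to_nat (b - a) - Z.to_nat (k - a))%nat with (Z.to_nat (b - k)) in H by lia.
  rewrite !INR_IZR_INZ, !Z2Nat.id in H by lia.
  replace (a + (k - a))%Z with k in H by lia.
  replace (a + Z.of_nat 0)%Z with a in H by lia.
  replace (a + (b - a))%Z with b in H by lia.
  exact H.
Qed.

Lemma second_diff_add_parabola (u : Z -> R) (h a e : R) (j : Z) :
  second_diff (fun i => u i + a * (IZR i * h) ^ 2 + e) j = second_diff u j + 2 * a * h ^ 2.
Proof. unfold second_diff; rewrite plus_IZR, minus_IZR; ring. Qed.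

Lemma concave_add_parabola (u F : Z -> R) (h c e : R) (a b : Z) :
  (forall j, (a < j < b)%Z -> second_diff u j = - h ^ 2 * F j) ->
  (forall j, (a < j < b)%Z -> c <= F j) ->
  forall j, (a < j < b)%Z -> second_diff (fun i => u i + c / 2 * (IZR i * h) ^ 2 + e) j <= 0.
Proof.
  intros Hu HF j Hj.
  rewrite second_diff_add_parabola, (Hu j Hj).
  pose proof (HF j Hj); pose proof (pow2_ge_0 h); nra.
Qed.

Section GridSolution.

Variables (N : Z) (h : R) (u F : Z -> R).
Hypotheses
  (u_nonneg : forall k, (- N <= k <= N)%Z -> 0 <= u k)
  (u_equation : forall j, (- N < j < N)%Z -> second_diff u j = - h ^ 2 * F j)
  (u_left : u (- N)%Z = 0)
  (u_right : u N = 0).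

(* On the middle half every chord weight is at least 1/4. *)
Lemma grid_quarter_lower (c : R) : 0 <= c ->
  (forall j, (- N < j < N)%Z -> - c <= F j) ->
  forall k0 k, (- N <= k0 <= N)%Z -> (- N <= 2 * k <= N)%Z ->
  u k0 / 4 - c / 2 * (IZR N * h) ^ 2 <= u k.
Proof.
  intros HC HF k0 k Hk0 Hk.
  set (w := fun i => u i + - c / 2 * (IZR i * h) ^ 2 + c / 2 * (IZR N * h) ^ 2).
  assert (Hw : forall j, (- N < j < N)%Z -> second_diff w j <= 0)
    by exact (concave_add_parabola u F h (- c) _ (- N) N u_equation HF).
  assert (Hwu : forall i, (- N <= i <= N)%Z -> u i <= w i).
  { intros i Hi; unfold w.
    assert (Hsq : (IZR i * h) ^ 2 <= (IZR N * h) ^ 2).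
    { rewrite !Rpow_mult_distr; apply Rmult_le_compat_r; [apply pow2_ge_0|].
      apply pow_maj_Rabs, Rabs_le; rewrite <- opp_IZR; split; apply IZR_le; lia. }
    nra. }
  assert (HwN : w N = u N) by (unfold w; cbv beta; lra).
  assert (HwmN : w (- N)%Z = u (- N)%Z) by (unfold w; cbv beta; rewrite opp_IZR; lra).
  rewrite u_right in HwN; rewrite u_left in HwmN.
  pose proof (Hwu k0 Hk0); pose proof (u_nonneg k0 Hk0).
  assert (Hquarter : w k0 / 4 <= w k).
  { destruct (Z_le_gt_dec k0 k) as [Hle|Hgt].
    - pose proof (concave_chord w k0 N k ltac:(lia) ltac:(intros j Hj; apply Hw; lia)) as Hch.
      assert (Hlen : 0 <= IZR (N - k0) <= 4 * IZR (N - k)).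
      { rewrite <- mult_IZR; split; apply IZR_le; lia. }
      destruct (Z.eq_dec k0 N) as [->|Hne]; [replace k with N by lia; lra|].
      assert (0 < IZR (N - k0)) by (apply IZR_lt; lia).
      assert (IZR (N - k0) * w k0 <= 4 * IZR (N - k) * w k0) by (apply Rmult_le_compat_r; lra).
      rewrite HwN in Hch; apply (Rmult_le_reg_l (IZR (N - k0))); lra.
    - pose proof (concave_chord w (- N) k0 k ltac:(lia) ltac:(intros j Hj; apply Hw; lia)) as Hch.
      assert (Hlen : 0 < IZR (k0 - - N) <= 4 * IZR (k - - N)).
      { rewrite <- mult_IZR; split; [apply IZR_lt|apply IZR_le]; lia. }
      assert (IZR (k0 - - N) * w k0 <= 4 * IZR (k - - N) * w k0) by (apply Rmult_le_compat_r; lra).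
      rewrite HwmN in Hch; apply (Rmult_le_reg_l (IZR (k0 - - N))); lra. }
  assert (w k <= u k + c / 2 * (IZR N * h) ^ 2).
  { unfold w; pose proof (pow2_ge_0 (IZR k * h)); nra. }
  lra.
Qed.

Lemma grid_center_lower (m gamma : R) : (4 <= N)%Z -> 0 <= gamma ->
  (forall j, (- N <= 2 * j <= N)%Z -> m <= u j) ->
  (forall j, (- N <= 2 * j <= N)%Z -> gamma <= F j) ->
  gamma * (3 / 8 * (IZR N * h)) ^ 2 <= 2 * u 0%Z - 2 * m.
Proof.
  intros HN Hgamma Hum HF.
  set (p := (N / 2)%Z).
  assert (Hp : (2 * p <= N <= 2 * p + 1)%Z).
  { pose proof (Z.div_mod N 2 ltac:(lia)); pose proof (Z.mod_pos_bound N 2 ltac:(lia)); lia. }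
  set (z := fun i => u i + gamma / 2 * (IZR i * h) ^ 2 + 0).
  assert (Hz : forall j, (- p < j < p)%Z -> second_diff z j <= 0).
  { apply (concave_add_parabola u F); intros j Hj; [apply u_equation|apply HF]; lia. }
  pose proof (concave_chord z (- p) p 0 ltac:(lia) Hz) as Hch.
  unfold z in Hch; rewrite !minus_IZR, !opp_IZR in Hch.
  pose proof (Hum p ltac:(lia)); pose proof (Hum (- p)%Z ltac:(lia)).
  assert (Hp0 : 0 < IZR p) by (apply IZR_lt; lia).
  assert (Hpp : 3 / 8 * IZR N <= IZR p).
  { assert (3 * IZR N <= 8 * IZR p) by (rewrite <- !mult_IZR; apply IZR_le; lia); lra. }
  assert (Hsq : (3 / 8 * (IZR N * h)) ^ 2 <= (IZR p * h) ^ 2).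
  { assert (0 < IZR N) by (apply IZR_lt; lia).
    rewrite <- Rmult_assoc, (Rpow_mult_distr (3 / 8 * IZR N)), (Rpow_mult_distr (IZR p)).
    apply Rmult_le_compat_r; [apply pow2_ge_0|].
    apply pow_incr; lra. }
  set (P := IZR p) in *.
  replace ((- P * h) ^ 2) with ((P * h) ^ 2) in Hch by ring.
  replace (IZR 0 * h) with 0 in Hch by (simpl; ring).
  assert (Hmid : u (- p)%Z + u p + gamma * (P * h) ^ 2 <= 2 * u 0%Z).
  { apply (Rmult_le_reg_l P); [exact Hp0|]; lra. }
  assert (gamma * (3 / 8 * (IZR N * h)) ^ 2 <= gamma * (P * h) ^ 2)
    by (apply Rmult_le_compat_l; assumption).
  lra.
Qed.

Lemma grid_center_below (c T : R) (g : R -> R) : 0 < h -> (4 <= N)%Z -> 0 <= c -> 0 <= T ->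
  strict_incr_halfline g ->
  (forall j, (- N < j < N)%Z -> - c <= F j) ->
  (forall j, (- N < j < N)%Z -> T <= u j -> g (u j) <= F j) ->
  (forall s, T <= s -> 6 / (3 / 8 * (IZR N * h)) ^ 2 * s
                       + 4 * c * (IZR N * h) ^ 2 / (3 / 8 * (IZR N * h)) ^ 2 < g s) ->
  u 0%Z / 4 - c / 2 * (IZR N * h) ^ 2 < T.
Proof.
  intros Hh HN Hc HT Hinc HFc HFg Hgrowth.
  set (r := 3 / 8 * (IZR N * h)) in *.
  apply Rnot_le_lt; intros Hm; set (m := u 0%Z / 4 - c / 2 * (IZR N * h) ^ 2) in *.
  assert (Hmid : forall j, (- N <= 2 * j <= N)%Z -> m <= u j)
    by (intros j Hj; apply (grid_quarter_lower c); auto; lia).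
  assert (Hgm : forall j, (- N <= 2 * j <= N)%Z -> g m <= F j).
  { intros j Hj; pose proof (Hmid j Hj).
    apply Rle_trans with (g (u j)); [apply strict_incr_halfline_le; [exact Hinc|lra]|].
    apply HFg; [lia|lra]. }
  assert (Hr0 : 0 < r) by (unfold r; assert (0 < IZR N) by (apply IZR_lt; lia); nra).
  assert (Hr : 0 < r ^ 2) by (apply pow_lt; exact Hr0).
  pose proof (Rmult_lt_compat_r (r ^ 2) _ _ Hr (Hgrowth m Hm)) as Hbig.
  replace ((6 / r ^ 2 * m + 4 * c * (IZR N * h) ^ 2 / r ^ 2) * r ^ 2)
    with (6 * m + 4 * c * (IZR N * h) ^ 2) in Hbig by (field; lra).
  assert (Hgm0 : 0 <= g m).
  { assert (0 <= 6 * m + 4 * c * (IZR N * h) ^ 2) by (pose proof (pow2_ge_0 (IZR N * h)); nra).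
    apply Rlt_le, (Rmult_lt_reg_r (r ^ 2)); [exact Hr|lra]. }
  pose proof (grid_center_lower m (g m) HN Hgm0 Hmid Hgm) as Hchord; fold r in Hchord.
  unfold m in *; lra.
Qed.

End GridSolution.

Lemma grid_node_bound (N j : Z) (h : R) : 0 < h -> (- N <= j <= N)%Z ->
  - (IZR N * h) <= IZR j * h <= IZR N * h.
Proof.
  intros Hh Hj.
  pose proof (IZR_le _ _ (proj1 Hj)); pose proof (IZR_le _ _ (proj2 Hj)).
  rewrite opp_IZR in *; split; nra.
Qed.

Lemma f_bounded_below (L K : R) (f : R -> R -> R) (g : R -> R) :
  cont_on_strip L f -> 0 < g 0 -> strict_incr_halfline g ->
  (forall x s, -L <= x <= L -> K <= s -> g s <= f x s) ->
  exists C, 0 <= C /\ forall x s, -L <= x <= L -> 0 <= s -> - C <= f x s.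
Proof.
  intros Hf Hg0 Hinc Hfg.
  destruct (cont_on_strip_bounded_below_box L K f Hf) as [C [HC HfC]].
  exists C; split; [exact HC|]; intros x s Hx Hs.
  destruct (Rle_dec s K) as [HsK|HsK]; [apply HfC; lra|].
  pose proof (Hfg x s Hx ltac:(lra)); pose proof (strict_incr_halfline_pos g Hg0 Hinc s Hs).
  lra.
Qed.

Theorem mainTheorem1 :
  forall (L K : R) (f : R -> R -> R) (g : R -> R),
    0 < L -> 0 < K ->
    cont_on_strip L f ->
    cont_on_halfline g ->
    0 < g 0 ->
    strict_incr_halfline g ->
    is_lim (fun s => s / sqrt (Gprim g K s)) p_infty 0 ->
    (forall x s, -L <= x <= L -> K <= s -> g s <= f x s) ->
    exists Mbar : R,
      forall (h : R) (n : nat),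
        0 < h -> L = INR n * h -> 4 * h <= L ->
        forall u : Z -> R,
          is_nonneg_discrete_solution f n h u ->
          forall k, (- Z.of_nat n <= k <= Z.of_nat n)%Z -> Rabs (u k) <= Mbar.
Proof.
  intros L K f g HL HK Hf Hg Hg0 Hinc Hlim Hfg.
  destruct (f_bounded_below L K f g Hf Hg0 Hinc Hfg) as [C [HC HfC]].
  assert (Hr : 0 < (3 / 8 * L) ^ 2) by (apply pow_lt; lra).
  destruct (g_eventually_above_affine g K HK Hg Hinc Hg0 Hlim
              (6 / (3 / 8 * L) ^ 2) (4 * C * L ^ 2 / (3 / 8 * L) ^ 2)) as [T [HKT HT]];
    [apply Rle_mult_inv_pos; lra|apply Rle_mult_inv_pos; [nra|lra]|].
  exists (16 * T + 10 * C * L ^ 2).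
  intros h n Hh HLn H4 u [Hnn [Heq [Hleft Hright]]] k Hk.
  set (N := Z.of_nat n) in *.
  assert (HLN : L = IZR N * h) by (unfold N; rewrite <- INR_IZR_INZ; exact HLn).
  assert (HN : (4 <= N)%Z) by (apply le_IZR; rewrite HLN in H4; nra).
  set (F := fun j => f (IZR j * h) (u j)).
  assert (Hlap : forall j, (- N < j < N)%Z -> second_diff u j = - h ^ 2 * F j).
  { intros j Hj; unfold F; rewrite <- (Heq j Hj); unfold dlap, second_diff; field; lra. }
  assert (Hnode : forall j, (- N < j < N)%Z -> -L <= IZR j * h <= L)
    by (intros j Hj; rewrite HLN; apply grid_node_bound; [exact Hh|lia]).
  assert (HFc : forall j, (- N < j < N)%Z -> - C <= F j)
    by (intros j Hj; apply HfC; [apply Hnode|apply Hnn]; lia).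
  assert (HFg : forall j, (- N < j < N)%Z -> T <= u j -> g (u j) <= F j)
    by (intros j Hj Hu; apply Hfg; [apply Hnode|lra]; lia).
  rewrite HLN in HT.
  pose proof (grid_center_below N h u F Hnn Hlap Hleft Hright C T g Hh HN HC ltac:(lra)
                Hinc HFc HFg HT) as Hcenter.
  pose proof (grid_quarter_lower N h u F Hnn Hlap Hleft Hright C HC HFc k 0%Z Hk ltac:(lia)).
  rewrite HLN, Rabs_pos_eq by (apply Hnn; exact Hk).
  lra.
Qed.
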